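(* Let $P$ and $Q$ be graded posets of ranks $m+1$ and $n+1$ respectively. Then $$\Theta(\Psi(P\diamond^* Q))=\begin{bmatrix} m+n\\ n\end{bmatrix}_q\cdot\Theta(\Psi(P))\cdot\Theta(\Psi(Q)).$$
   Context: All posets are graded with minimum $\hat0$, maximum $\hat1$ and rank function $\rho$. The dual diamond product is $P\diamond^*Q=\big((P-\{\hat1_P\})\times(Q-\{\hat1_Q\})\big)\cup\{\hat1\}$, where the first part carries the componentwise (Cartesian product) order and $\hat1$ is a new maximum; it has rank $m+n+1$. For such a poset $P$ of rank $r+1$, its $\mathbf{a}\mathbf{b}$-index is $\Psi(P)=\sum_{S\subseteq\{1,\dots,r\}} f_S\, v_S$, where for $S=\{s_1<\cdots<s_k\}$, $f_S$ is the number of chains $\hat0<x_1<\cdots<x_k<\hat1$ with $\rho(x_i)=s_i$, and $v_S=v_1\cdots v_r$ with $v_i=\mathbf{b}$ if $i\in S$, $v_i=\mathbf{a}-\mathbf{b}$ otherwise ($\mathbf{a},\mathbf{b}$ non-commuting variables). The Major MacMahon map $\Theta:\mathbb{Z}\langle\mathbf{a},\mathbf{b}\rangle\to\mathbb{Z}[q]$ is linear with $\Theta(u_1\cdots u_r)=\prod_{i:\,u_i=\mathbf{b}}q^i$ on monomials. $[k]=1+\cdots+q^{k-1}$, $[k]!=[k]\cdots[1]$, $[0]!=1$, $\begin{bmatrix} m+n\\ n\end{bmatrix}_q=\frac{[m+n]!}{[m]!\,[n]!}$. *)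

From mathcomp Require Import all_boot all_algebra.
Set Implicit Arguments. Unset Strict Implicit. Unset Printing Implicit Defensive.
Import GRing.Theory.
Local Open Scope ring_scope.

Definition ltb (T : finType) (le : rel T) (x y : T) : bool := (x != y) && le x y.

Definition is_graded_poset (T : finType) (le : rel T) (bot top : T) (rk : T -> nat)
  : Prop :=
  (forall x, le x x) /\
  (forall x y, le x y -> le y x -> x = y) /\
  (forall x y z, le x y -> le y z -> le x z) /\
  (forall x, le bot x /\ le x top) /\
  rk bot = 0%N /\
  (forall x y, ltb le x y -> (forall z, ~~ (ltb le x z && ltb le z y)) ->
                   rk y = (rk x).+1).

(* For a poset of rank r+1: index i : 'I_r stands for the rank i+1.
   Chains bot < x_1 < ... < x_k < top with rank set S are encoded as
   functions c : 'I_r -> option T with c i = Some x_j exactly at i \in S. *)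
Definition chains (T : finType) (le : rel T) (bot top : T) (rk : T -> nat)
  (r : nat) (S : {set 'I_r}) : {set {ffun 'I_r -> option T}} :=
  [set c : {ffun 'I_r -> option T} |
    [forall i : 'I_r, if i \in S then
        (if c i is Some x then [&& rk x == i.+1, ltb le bot x & ltb le x top]
         else false)
      else c i == None]
    && [forall i : 'I_r, forall j : 'I_r, (i < j)%N ==>
        (match c i, c j with Some x, Some y => ltb le x y | _, _ => true end)]].

Definition fS (T : finType) (le : rel T) (bot top : T) (rk : T -> nat)
  (r : nat) (S : {set 'I_r}) : nat := #|chains le bot top rk S|.

(* Homogeneous degree-r elements of Z<a,b> are represented by their coefficient
   functions on words w : 'I_r -> bool (w i = true means letter b, false means a;
   position i : 'I_r is position i+1). *)
(* coefficient of the word w in v_S = v_1 ... v_r, v_i = b if i in S, a - b else *)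
Definition vcoef (r : nat) (S : {set 'I_r}) (w : {ffun 'I_r -> bool}) : int :=
  \prod_(i < r) (if i \in S then (if w i then 1 else 0)
                 else (if w i then -1 else 1)).

Definition abIndex (T : finType) (le : rel T) (bot top : T) (rk : T -> nat)
  (r : nat) : {ffun {ffun 'I_r -> bool} -> int} :=
  [ffun w => \sum_(S : {set 'I_r}) (fS le bot top rk S)%:R * vcoef S w].

Definition Theta (r : nat) (u : {ffun {ffun 'I_r -> bool} -> int}) : {poly int} :=
  \sum_(w : {ffun 'I_r -> bool}) u w *: 'X^(\sum_(i < r | w i) i.+1).

Definition qint (k : nat) : {poly int} := \sum_(i < k) 'X^i.
Definition qfact (k : nat) : {poly int} := \prod_(i < k) qint i.+1.
(* the divisor is monic, so %/ is exact polynomial division *)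
Definition qbinom (m n : nat) : {poly int} := qfact (m + n) %/ (qfact m * qfact n).

Unset Implicit Arguments.
(* Dual diamond product: ((P - top_P) x (Q - top_Q)) u {new top} *)
Definition ddcar {P Q : finType} (topP : P) (topQ : Q) : finType :=
  option ({x : P | x != topP} * {y : Q | y != topQ}).

Definition dd_le {P Q : finType} (leP : rel P) (leQ : rel Q) (topP : P) (topQ : Q)
  : rel (ddcar topP topQ) :=
  fun u v => match u, v with
  | _, None => true
  | None, Some _ => false
  | Some (a, b), Some (c, d) => leP (val a) (val c) && leQ (val b) (val d)
  end.

Definition dd_top {P Q : finType} (topP : P) (topQ : Q) : ddcar topP topQ := None.

(* the minimum (botP, botQ); the fallback None is never used when botP != topP,
   botQ != topQ *)
Definition dd_bot {P Q : finType} (botP topP : P) (botQ topQ : Q)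
  : ddcar topP topQ :=
  match @insub _ (fun x => x != topP) _ botP,
        @insub _ (fun y => y != topQ) _ botQ with
  | Some a, Some b => Some (a, b)
  | _, _ => None
  end.

Definition dd_rk {P Q : finType} (topP : P) (topQ : Q) (rkP : P -> nat)
  (rkQ : Q -> nat) (u : ddcar topP topQ) : nat :=
  match u with
  | None => ((rkP topP).-1 + (rkQ topQ).-1).+1
  | Some (a, b) => (rkP (val a) + rkQ (val b))%N
  end.

(* Expanding v_S, a rank i in S contributes q^i to Theta and a rank outside S
   contributes 1 - q^i, so Theta(Psi(P)) = prod_(i <= m) (1 - q^i) * B(top) in the
   fraction field, where B(x) sums over the chains bot < x_1 < ... < x_k < x the
   weights prod_j t(rk x_j), with t(k) = q^k / (1 - q^k).  Putting Z(bot) = 1 and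
   Z(x) = t(rk x) B(x), one has B(x) = sum_(y < x) Z(y), and in the dual diamond
   product Z(a, b) = Z(a) Z(b) by induction on the rank, thanks to the identity
   t(i + j) ((1 + t i)(1 + t j) - t i t j) = t i t j.  Hence B(top) is multiplicative,
   and the q-binomial coefficient converts prod_(i <= m) (1 - q^i) * prod_(j <= n) (1 - q^j)
   into prod_(i <= m + n) (1 - q^i). *)

From mathcomp Require Import all_boot all_algebra.
From mathcomp Require Import ring.
Import GRing.Theory.
Local Open Scope ring_scope.
Set Implicit Arguments. Unset Strict Implicit. Unset Printing Implicit Defensive.

Record graded (T : finType) (le : rel T) (bot top : T) (rk : T -> nat) (r : nat)
  : Prop := Graded {
  graded_refl : forall x, le x x;
  graded_anti : forall x y, le x y -> le y x -> x = y;
  graded_trans : forall x y z, le x y -> le y z -> le x z;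
  graded_rk_lt : forall x y, ltb le x y -> (rk x < rk y)%N;
  graded_bot : forall x, le bot x;
  graded_top : forall x, le x top;
  graded_rk_bot : rk bot = 0%N;
  graded_rk_top : rk top = r.+1 }.

Section StrictOrder.
Variables (T : finType) (le : rel T).
Hypotheses (le_anti : forall x y, le x y -> le y x -> x = y)
  (le_trans : forall x y z, le x y -> le y z -> le x z).
Local Notation lt := (ltb le).

Lemma ltb_trans x y z : lt x y -> lt y z -> lt x z.
Proof.
move=> /andP[nxy lxy] /andP[nyz lyz]; rewrite /ltb (le_trans lxy lyz) andbT.
by apply: contraNneq nxy => exz; rewrite -exz in lyz; rewrite (le_anti lxy lyz).
Qed.

Lemma ltb_le_trans x y z : lt x y -> le y z -> lt x z.
Proof.
move=> xy yz; case: (eqVneq y z) => [<- //|nyz].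
by apply: ltb_trans xy _; rewrite /ltb nyz.
Qed.

Definition interval (x y : T) : {set T} := [set z | lt x z && lt z y].

Lemma interval_properl x y z : lt z y -> z \in interval x y -> interval x z \proper interval x y.
Proof.
move=> zy zxy; apply/properP; split; last by exists z; rewrite // inE /ltb eqxx andbF.
by apply/subsetP => w; rewrite !inE => /andP[-> wz]; exact: ltb_trans wz zy.
Qed.

Lemma interval_properr x y z : lt x z -> z \in interval x y -> interval z y \proper interval x y.
Proof.
move=> xz zxy; apply/properP; split; last by exists z; rewrite // inE /ltb eqxx.
by apply/subsetP => w; rewrite !inE => /andP[zw ->]; rewrite (ltb_trans xz zw).
Qed.

End StrictOrder.

(* Covers raise the rank by one, hence by induction on the size of the open
   interval every strict inequality raises it. *)
Lemma is_graded_poset_graded (T : finType) (le : rel T) (bot top : T) (rk : T -> nat) r :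
  is_graded_poset le bot top rk -> rk top = r.+1 -> graded le bot top rk r.
Proof.
move=> [le_refl [le_anti [le_trans [le_bot_top [rk_bot rk_cover]]]]] rk_top.
suff rk_lt k x y : (#|interval le x y| <= k)%N -> ltb le x y -> (rk x < rk y)%N.
  by split=> // [x y|x|x]; [exact: rk_lt | case: (le_bot_top x)..].
elim: k x y => [|k IHk] x y hk xy.
  rewrite (rk_cover x y xy) // => z; apply: contraT => /negbNE zxy.
  by move: hk; rewrite leqn0 cards_eq0 => /eqP/setP/(_ z); rewrite inE zxy inE.
have [z /andP[xz zy]|no_z] := pickP (fun z => ltb le x z && ltb le z y); last first.
  by rewrite (rk_cover x y xy) // => z; rewrite no_z.
have zxy : z \in interval le x y by rewrite inE xz zy.
have shrink (A : {set T}) : A \proper interval le x y -> (#|A| <= k)%N.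
  by move=> hA; exact: leq_trans (proper_card hA) hk.
apply: (@ltn_trans (rk z)); apply: IHk => //; apply: shrink.
- exact: (interval_properl le_anti le_trans zy zxy).
- exact: (interval_properr le_anti le_trans xz zxy).
Qed.

Section GradedTheory.
Variables (T : finType) (le : rel T) (bot top : T) (rk : T -> nat) (r : nat).
Hypothesis G : graded le bot top rk r.

Local Notation lt := (ltb le).

Lemma graded_lt_trans x y z : lt x y -> lt y z -> lt x z.
Proof. exact: (ltb_trans (graded_anti G) (graded_trans G)). Qed.

Lemma graded_lt_le_trans x y z : lt x y -> le y z -> lt x z.
Proof. exact: (ltb_le_trans (graded_anti G) (graded_trans G)). Qed.

Lemma graded_lt_top x : x != top -> lt x top.
Proof. by move=> xt; rewrite /ltb xt (graded_top G). Qed.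

Lemma graded_rk_slot y : lt bot y -> lt y top -> exists s : 'I_r, rk y = s.+1.
Proof.
move=> /(graded_rk_lt G) + /(graded_rk_lt G); rewrite (graded_rk_bot G) (graded_rk_top G).
by case: (rk y) => // k _; rewrite ltnS => k_r; exists (Ordinal k_r).
Qed.

Lemma graded_bot_neq_top : bot != top.
Proof. by apply: contra_eqN (graded_rk_top G) => /eqP <-; rewrite (graded_rk_bot G). Qed.

Lemma graded_rk_le x y : le x y -> (rk x <= rk y)%N.
Proof.
move=> xy; case: (eqVneq x y) => [-> //|nxy].
by apply/ltnW/(graded_rk_lt G); rewrite /ltb nxy.
Qed.

Lemma graded_rk_le_top x : x != top -> (rk x <= r)%N.
Proof. by move/graded_lt_top/(graded_rk_lt G); rewrite (graded_rk_top G). Qed.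

Lemma graded_rk_pos x : x != bot -> (0 < rk x)%N.
Proof.
move=> xb; rewrite -(graded_rk_bot G); apply: (graded_rk_lt G).
by rewrite /ltb eq_sym xb (graded_bot G).
Qed.

Lemma big_lt_top (K : nmodType) (F : T -> K) :
  \sum_(y | ltb le y top) F y = \sum_(a : {x : T | x != top}) F (val a).
Proof.
rewrite -(big_sub_cond (predC1 top) xpredT); apply: eq_bigl => y.
by rewrite /ltb (graded_top G) !andbT.
Qed.

Lemma big_le_sub_top (K : nmodType) (F : T -> K) (a : {x : T | x != top}) :
  \sum_(c : {x : T | x != top} | le (val c) (val a)) F (val c) = \sum_(y | le y (val a)) F y.
Proof.
rewrite -(big_sub_cond (predC1 top) (fun y => le y (val a))).
apply: eq_bigl => y /=; apply: andb_idl => ya; apply: contra (valP a) => /eqP yt.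
by apply/eqP/(graded_anti G (graded_top G _)); rewrite yt in ya.
Qed.

End GradedTheory.

Section Chains.
Variables (T : finType) (le : rel T) (bot top : T) (rk : T -> nat) (r : nat).
Hypothesis G : graded le bot top rk r.

Local Notation lt := (ltb le).
Local Notation chain := {ffun 'I_r -> option T}.

Definition chain_below (x : T) (c : chain) : bool :=
  [forall i, if c i is Some y then [&& rk y == i.+1, lt bot y & lt y x] else true] &&
  [forall i : 'I_r, forall j : 'I_r, (i < j)%N ==>
     match c i, c j with Some a, Some b => lt a b | _, _ => true end].

Lemma chain_below_elt x (c : chain) i a : chain_below x c -> c i = Some a ->
  [/\ rk a = i.+1, lt bot a & lt a x].
Proof. by case/andP=> /forallP/(_ i) + _ ci; rewrite ci => /and3P[/eqP]. Qed.

Lemma chain_below_lt x (c : chain) (i j : 'I_r) a b : chain_below x c -> (i < j)%N ->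
  c i = Some a -> c j = Some b -> lt a b.
Proof.
case/andP=> _ /forallP/(_ i)/forallP/(_ j)/implyP + ij ci cj.
by move/(_ ij); rewrite ci cj.
Qed.

Lemma chain_belowP x (c : chain) :
  (forall i a, c i = Some a -> [/\ rk a = i.+1, lt bot a & lt a x]) ->
  (forall (i j : 'I_r) a b, (i < j)%N -> c i = Some a -> c j = Some b -> lt a b) ->
  chain_below x c.
Proof.
move=> c_elt c_lt; apply/andP; split; apply/forallP=> i.
  by case ci: (c i) => [a|] //; case: (c_elt _ _ ci) => -> -> ->; rewrite eqxx.
apply/forallP=> j; apply/implyP=> ij.
by case ci: (c i) => [a|] //; case cj: (c j) => [b|] //; exact: c_lt ij ci cj.
Qed.

Lemma chain_below_rk_none x (c : chain) (s : 'I_r) : chain_below x c -> rk x = s.+1 -> c s = None.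
Proof.
move=> cx rkx; case cs: (c s) => [a|] //.
by case: (chain_below_elt cx cs) => rka _ /(graded_rk_lt G); rewrite rka rkx ltnn.
Qed.

Definition top_slot (s : 'I_r) (c : chain) : bool :=
  (c s != None) && [forall i : 'I_r, (s < i)%N ==> (c i == None)].

Definition chain_del (s : 'I_r) (c : chain) : chain :=
  [ffun i => if i == s then None else c i].

Definition chain_ins (s : 'I_r) (y : T) (c : chain) : chain :=
  [ffun i => if i == s then Some y else c i].

Lemma chain_del_below x (c : chain) (s : 'I_r) y :
  chain_below x c -> top_slot s c -> c s = Some y -> chain_below y (chain_del s c).
Proof.
move=> cx /andP[_ /forallP above_s] cs; apply: chain_belowP => [i a|i j a b ij].
  rewrite ffunE; case: eqP => // /eqP i_s ci.
  case: (chain_below_elt cx ci) => -> -> _; split=> //.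
  have lt_is : (i < s)%N.
    rewrite ltn_neqAle i_s leqNgt; apply/negP => /(implyP (above_s i)).
    by rewrite ci.
  exact: chain_below_lt cx lt_is ci cs.
rewrite !ffunE; case: eqP => // _ ci; case: eqP => // _ cj.
exact: chain_below_lt cx ij ci cj.
Qed.

Lemma chain_ins_below x (c : chain) (s : 'I_r) y :
  chain_below y c -> lt bot y -> lt y x -> rk y = s.+1 ->
  chain_below x (chain_ins s y c) && top_slot s (chain_ins s y c).
Proof.
move=> cy boty yx rky.
have rk_below i a : c i = Some a -> (i < s)%N.
  by case/(chain_below_elt cy) => rka _ /(graded_rk_lt G); rewrite rka rky.
apply/andP; split; first apply: chain_belowP => [i a|i j a b ij].
- rewrite ffunE; case: eqP => [-> [<-] //|_ ci].
  by case: (chain_below_elt cy ci) => -> -> ay; split=> //; exact: (graded_lt_trans G ay yx).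
- rewrite !ffunE; case: eqP => [i_s [<-]|_ ci].
    case: eqP => [js|_ /rk_below]; first by rewrite i_s js ltnn in ij.
    by rewrite -i_s => /(ltn_trans ij); rewrite ltnn.
  case: eqP => [_ [<-]|_ cj]; first by case: (chain_below_elt cy ci).
  exact: chain_below_lt cy ij ci cj.
apply/andP; split; first by rewrite ffunE eqxx.
apply/forallP=> i; apply/implyP=> si; rewrite ffunE.
case: (eqVneq i s) => [i_s|_]; first by rewrite i_s ltnn in si.
by case ci: (c i) => [a|] //; move: (rk_below _ _ ci); rewrite ltnNge ltnW.
Qed.

Lemma top_slot_uniq (c : chain) :
  c != [ffun => None] -> exists s, forall s', top_slot s' c = (s' == s).
Proof.
move=> c_nonempty.
have [i0 ci0] : exists i0, c i0 != None.
  apply/existsP; apply: contraR c_nonempty => /existsPn c_none.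
  by apply/eqP/ffunP => i; rewrite ffunE; apply/eqP/negbNE/c_none.
have [s cs s_max] := @arg_maxnP _ i0 (fun i => c i != None) val ci0.
exists s => s'; apply/idP/eqP => [/andP[cs' /forallP above_s']|->].
  apply/val_inj/eqP; rewrite eqn_leq; apply/andP; split; first exact: s_max.
  by rewrite leqNgt; apply: contra cs => /(implyP (above_s' s)).
rewrite /top_slot cs; apply/forallP => i; apply/implyP => si.
by apply: contraTT si => /s_max; rewrite -leqNgt.
Qed.

Variables (R : comNzRingType) (t : nat -> R).

Definition chain_weight (c : chain) : R :=
  \prod_(i < r) (if c i is Some _ then t i.+1 else 1).

Definition chain_sum (x : T) : R := \sum_(c | chain_below x c) chain_weight c.

Lemma chain_weight_ins (c : chain) s y : c s = None ->
  chain_weight (chain_ins s y c) = t s.+1 * chain_weight c.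
Proof.
move=> cs; rewrite /chain_weight [LHS](bigD1 s) // [in RHS](bigD1 s) //= ffunE eqxx cs mul1r.
by congr (_ * _); apply: eq_bigr => i /negbTE i_s; rewrite ffunE i_s.
Qed.

Lemma sum_top_slot_at x (s : 'I_r) y : lt bot y -> lt y x -> rk y = s.+1 ->
  \sum_(c | chain_below x c && top_slot s c && (odflt bot (c s) == y)) chain_weight c
  = t s.+1 * chain_sum y.
Proof.
move=> boty yx rky; rewrite /chain_sum big_distrr /=.
rewrite (reindex_onto (chain_ins s y) (chain_del s)); last first.
  move=> c /andP[/andP[_ /andP[+ _]]]; case cs: (c s) => [a|] //= _ /eqP <-.
  by apply/ffunP=> i; rewrite !ffunE; case: eqP => [->|].
apply: eq_big => c.
  apply/idP/idP => [/andP[/andP[/andP[cx cs]] _ /eqP <-]|cy].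
    by apply: chain_del_below cx cs _; rewrite ffunE eqxx.
  have cs := chain_below_rk_none cy rky.
  rewrite chain_ins_below // ffunE !eqxx /=; apply/eqP/ffunP => i.
  by rewrite !ffunE; case: eqP => [->|].
move=> /andP[_ /eqP <-]; rewrite chain_weight_ins //.
by rewrite ffunE eqxx.
Qed.

Lemma sum_nonempty_chains x :
  \sum_(c | chain_below x c && (c != [ffun => None])) chain_weight c
  = \sum_(s < r) \sum_(c | chain_below x c && top_slot s c) chain_weight c.
Proof.
rewrite [RHS](exchange_big_dep (fun c => chain_below x c && (c != [ffun => None]))) /=.
  apply: eq_bigr => c /andP[cx /top_slot_uniq[s top_s]].
  by rewrite (eq_bigl (pred1 s)) ?big_pred1_eq // => s'; rewrite /= cx top_s.
move=> s c _ /andP[-> /andP[cs _]]; by apply: contraNneq cs => ->; rewrite ffunE.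
Qed.

Lemma sum_top_slot x (s : 'I_r) :
  \sum_(c | chain_below x c && top_slot s c) chain_weight c
  = \sum_(y | (rk y == s.+1) && lt bot y && lt y x) t s.+1 * chain_sum y.
Proof.
rewrite (partition_big (fun c : chain => odflt bot (c s))
  (fun y => (rk y == s.+1) && lt bot y && lt y x)).
  by apply: eq_bigr => y /andP[/andP[/eqP rky boty] yx]; exact: sum_top_slot_at.
move=> c /andP[cx /andP[]]; case cs: (c s) => [a|] //= _ _.
by case: (chain_below_elt cx cs) => -> -> ->; rewrite eqxx.
Qed.

Lemma chain_sum_rec x :
  chain_sum x = 1 + \sum_(y | lt bot y && lt y x) t (rk y) * chain_sum y.
Proof.
have empty_below : chain_below x [ffun => None].
  by apply: chain_belowP => [i a|i j a b _]; rewrite ffunE.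
rewrite {1}/chain_sum (bigD1 [ffun => None]) //= sum_nonempty_chains.
rewrite [chain_weight _]big1 => [|i _]; last by rewrite ffunE.
congr (_ + _); rewrite (eq_bigr _ (fun s _ => sum_top_slot x s)).
rewrite (exchange_big_dep (fun y => lt bot y && lt y x)) /=; last first.
  by move=> s y _ /andP[/andP[_ ->] ->].
apply: eq_bigr => y /andP[boty yx].
have yt : lt y top := graded_lt_le_trans G yx (graded_top G x).
have [s rky] := graded_rk_slot G boty yt.
by rewrite (big_pred1 s) ?rky // => s'; rewrite boty yx !andbT eqSS eq_sym.
Qed.

Definition top_weight (y : T) : R := if y == bot then 1 else t (rk y) * chain_sum y.

Lemma chain_sum_lt x : x != bot -> chain_sum x = \sum_(y | lt y x) top_weight y.
Proof.
move=> xb; rewrite chain_sum_rec [RHS](bigD1 bot) /=; last by rewrite /ltb eq_sym xb (graded_bot G).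
rewrite /top_weight eqxx; congr (_ + _); apply: eq_big => y.
  by rewrite [lt bot y]/ltb (graded_bot G) andbT eq_sym andbC.
by case/andP=> /andP[/negbTE]; rewrite eq_sym => ->.
Qed.

Lemma sum_le_top_weight x : x != bot ->
  \sum_(y | le y x) top_weight y = (1 + t (rk x)) * chain_sum x.
Proof.
move=> xb; rewrite (bigD1 x) ?(graded_refl G) //= [top_weight x]/top_weight (negbTE xb).
rewrite mulrDl mul1r addrC chain_sum_lt //; congr (_ + _).
by apply: eq_bigl => y; rewrite /ltb andbC.
Qed.

Lemma sum_le_bot_top_weight : \sum_(y | le y bot) top_weight y = 1.
Proof.
rewrite (big_pred1 bot) => [|y /=]; first by rewrite /top_weight eqxx.
by apply/idP/eqP => [yb|->]; [exact: (graded_anti G) yb (graded_bot G y) | exact: (graded_refl G)].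
Qed.

End Chains.

Lemma Theta_vcoef r (S : {set 'I_r}) :
  \sum_(w : {ffun 'I_r -> bool}) vcoef S w *: 'X^(\sum_(i < r | w i) i.+1)
  = \prod_(i < r) (if i \in S then 'X^(i.+1) else 1 - 'X^(i.+1)) :> {poly int}.
Proof.
rewrite [RHS](eq_bigr (fun i => \sum_(b : bool)
    (if i \in S then (b : int) else (-1) ^+ b) *: (if b then 'X^(i.+1) else 1))); last first.
  move=> i _; rewrite big_bool /=.
  by case: (i \in S); rewrite ?scale1r ?scale0r ?scaleN1r ?addr0 // addrC.
rewrite bigA_distr_bigA; apply: eq_bigr => w _.
rewrite scaler_prod expr_sum /vcoef; congr (_ *: _); last by rewrite big_mkcond.
by apply: eq_bigr => i _; case: (i \in S); case: (w i).
Qed.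

Section ThetaChains.
Variables (T : finType) (le : rel T) (bot top : T) (rk : T -> nat) (r : nat).
Local Notation chain := {ffun 'I_r -> option T}.

Definition chain_support (c : chain) : {set 'I_r} := [set i | c i != None].

Lemma mem_chains S c :
  (c \in chains le bot top rk S) = chain_below le bot rk top c && (S == chain_support c).
Proof.
rewrite inE /chain_below andbAC; congr (_ && _).
apply/forallP/andP => [in_S|[/forallP c_elt /eqP->] i]; last by rewrite inE; case: (c i) (c_elt i).
split; last by apply/eqP/setP => i; rewrite inE; move: (in_S i); case: (i \in S); case: (c i).
by apply/forallP => i; move: (in_S i); case: (i \in S); case: (c i).
Qed.

Lemma Theta_abIndex : Theta (abIndex le bot top rk r) =
  \sum_(c | chain_below le bot rk top c)
    \prod_(i < r) (if c i is Some _ then 'X^(i.+1) else 1 - 'X^(i.+1)).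
Proof.
rewrite /Theta; under eq_bigr do rewrite ffunE scaler_suml.
rewrite exchange_big /=.
under eq_bigr do (under eq_bigr do rewrite -scalerA; rewrite -scaler_sumr Theta_vcoef).
rewrite (partition_big chain_support xpredT) //=; apply: eq_bigr => S _.
rewrite /fS scaler_nat -sumr_const; apply: eq_big => c; first by rewrite mem_chains eq_sym.
rewrite mem_chains => /andP[_ /eqP ->]; apply: eq_bigr => i _.
by rewrite inE; case: (c i).
Qed.

End ThetaChains.

Lemma big_option (A : finType) (K : nmodType) (F : option A -> K) (p : pred (option A)) :
  \sum_(u | p u) F u = (if p None then F None else 0) + \sum_(x | p (Some x)) F (Some x).
Proof.
rewrite big_mkcond (bigD1 None) //=; congr (_ + _).
rewrite (reindex_omap Some id) => [|[]//]; rewrite [RHS]big_mkcond.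
by apply: eq_bigl => x; rewrite eqxx.
Qed.

Section DualDiamond.
Variables (P Q : finType) (leP : rel P) (leQ : rel Q) (botP topP : P) (botQ topQ : Q)
  (rkP : P -> nat) (rkQ : Q -> nat) (m n : nat).
Hypotheses (GP : graded leP botP topP rkP m) (GQ : graded leQ botQ topQ rkQ n).

Local Notation P' := {x : P | x != topP}.
Local Notation Q' := {y : Q | y != topQ}.
Local Notation leR := (dd_le leP leQ topP topQ).
Local Notation rkR := (dd_rk topP topQ rkP rkQ).
Local Notation botR := (dd_bot botP topP botQ topQ).
Local Notation topR := (dd_top topP topQ).

Lemma dd_botE : botR = Some (exist _ botP (graded_bot_neq_top GP),
                             exist _ botQ (graded_bot_neq_top GQ)).
Proof.
rewrite /dd_bot (insubT (fun x => x != topP) (graded_bot_neq_top GP)).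
by rewrite (insubT (fun y => y != topQ) (graded_bot_neq_top GQ)).
Qed.

Lemma eq_dd_bot (a : P') (b : Q') : (Some (a, b) == botR) = (val a == botP) && (val b == botQ).
Proof.
rewrite dd_botE; apply/eqP/andP => [[-> ->] //|[/eqP ea /eqP eb]].
by congr (Some (_, _)); apply: val_inj.
Qed.

Lemma dd_rk_lt u v : ltb leR u v -> (rkR u < rkR v)%N.
Proof.
rewrite /ltb; case: u v => [[a b]|] [[c d]|] //=; last first.
  move=> _; rewrite (graded_rk_top GP) (graded_rk_top GQ) ltnS.
  exact: leq_add (graded_rk_le_top GP (valP a)) (graded_rk_le_top GQ (valP b)).
move=> /andP[abcd /andP[ac bd]].
case: (eqVneq a c) abcd => [<- abbd|nac _]; last first.
  rewrite -addSn; apply: leq_add (graded_rk_le GQ bd).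
  by apply: (graded_rk_lt GP); rewrite /ltb ac andbT (inj_eq val_inj).
rewrite ltn_add2l; apply: (graded_rk_lt GQ); rewrite /ltb bd andbT (inj_eq val_inj).
by apply: contraNneq abbd => ->.
Qed.

Lemma dd_graded : graded leR botR topR rkR (m + n).
Proof.
split.
- by case=> [[a b]|] //=; rewrite (graded_refl GP) (graded_refl GQ).
- case=> [[a b]|] [[c d]|] //= /andP[ac bd] /andP[ca db].
  by congr (Some (_, _)); apply: val_inj;
    [exact: (graded_anti GP) ac ca | exact: (graded_anti GQ) bd db].
- case=> [[a b]|] [[c d]|] [[e f]|] //= /andP[ac bd] /andP[ce df].
  by rewrite (graded_trans GP ac ce) (graded_trans GQ bd df).
- exact: dd_rk_lt.
- by rewrite dd_botE; case=> [[a b]|] //=; rewrite (graded_bot GP) (graded_bot GQ).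
- by case=> [[a b]|].
- by rewrite dd_botE /= (graded_rk_bot GP) (graded_rk_bot GQ).
- by rewrite /= (graded_rk_top GP) (graded_rk_top GQ).
Qed.

Variables (R : comNzRingType) (t : nat -> R).
Hypothesis t_add : forall a b, (0 < a)%N -> (0 < b)%N ->
  t (a + b) * ((1 + t a) * (1 + t b) - t a * t b) = t a * t b.

Local Notation ZP := (top_weight leP botP rkP m t).
Local Notation ZQ := (top_weight leQ botQ rkQ n t).
Local Notation ZR := (top_weight leR botR rkR (m + n) t).

Lemma top_weight_dd_step (a : P') (b : Q') :
  (forall c d, ltb leR (Some (c, d)) (Some (a, b)) ->
     ZR (Some (c, d)) = ZP (val c) * ZQ (val d)) ->
  Some (a, b) != botR ->
  ZR (Some (a, b)) = t (rkP (val a) + rkQ (val b)) *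
    ((\sum_(y | leP y (val a)) ZP y) * (\sum_(y | leQ y (val b)) ZQ y)
     - ZP (val a) * ZQ (val b)).
Proof.
move=> IH ab_bot; rewrite {1}/top_weight (negbTE ab_bot) (chain_sum_lt dd_graded) //.
congr (_ * _); rewrite big_option /= add0r.
rewrite -(big_le_sub_top GP) -(big_le_sub_top GQ) big_distrlr pair_big_dep /=.
rewrite [X in _ = X - _](bigD1 (a, b)) /=; last by rewrite (graded_refl GP) (graded_refl GQ).
rewrite addrC addrK; apply: eq_big => -[c d] /=; last exact: IH.
by rewrite /ltb /= andbC.
Qed.

Lemma top_weight_dd (a : P') (b : Q') : ZR (Some (a, b)) = ZP (val a) * ZQ (val b).
Proof.
suff IH N : forall a b, (rkP (val a) + rkQ (val b) < N)%N ->
    ZR (Some (a, b)) = ZP (val a) * ZQ (val b) by exact: IH _ a b (ltnSn _).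
elim: N => [//|N IHN] {}a {}b ab_N.
have IH c d : ltb leR (Some (c, d)) (Some (a, b)) ->
    ZR (Some (c, d)) = ZP (val c) * ZQ (val d).
  by move/dd_rk_lt => cd_ab; apply: IHN; exact: leq_trans cd_ab ab_N.
have [a_bot|a_bot] := eqVneq (val a) botP; have [b_bot|b_bot] := eqVneq (val b) botQ.
- by rewrite /top_weight eq_dd_bot a_bot b_bot !eqxx mulr1.
all: rewrite top_weight_dd_step //; last by rewrite eq_dd_bot negb_and ?a_bot ?b_bot ?orbT.
- rewrite a_bot (sum_le_bot_top_weight GP) (sum_le_top_weight GQ) // /top_weight.
  by rewrite eqxx (negbTE b_bot) (graded_rk_bot GP) add0n; ring.
- rewrite b_bot (sum_le_bot_top_weight GQ) (sum_le_top_weight GP) // /top_weight.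
  by rewrite eqxx (negbTE a_bot) (graded_rk_bot GQ) addn0; ring.
- rewrite (sum_le_top_weight GP) // (sum_le_top_weight GQ) // /top_weight.
  rewrite (negbTE a_bot) (negbTE b_bot).
  have := t_add (graded_rk_pos GP a_bot) (graded_rk_pos GQ b_bot).
  set ta := t (rkP _); set tb := t (rkQ _); set tab := t _ => t_ab.
  by rewrite [RHS]mulrACA -t_ab; ring.
Qed.

Lemma chain_sum_dd_top : chain_sum leR botR rkR (m + n) t topR
  = chain_sum leP botP rkP m t topP * chain_sum leQ botQ rkQ n t topQ.
Proof.
rewrite (chain_sum_lt dd_graded); last by rewrite dd_botE.
have topP_bot : topP != botP by rewrite eq_sym (graded_bot_neq_top GP).
have topQ_bot : topQ != botQ by rewrite eq_sym (graded_bot_neq_top GQ).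
rewrite (chain_sum_lt GP) // (chain_sum_lt GQ) //.
rewrite big_option /= add0r (eq_bigr (fun p => ZP (val p.1) * ZQ (val p.2))); last first.
  by case=> a b _; exact: top_weight_dd.
rewrite (big_lt_top GP) (big_lt_top GQ) big_distrlr pair_big.
by apply: eq_bigl => -[].
Qed.

End DualDiamond.

Definition qpoch (k : nat) : {poly int} := \prod_(i < k) (1 - 'X^(i.+1)).

Lemma qint_mul_1subX k : qint k * (1 - 'X) = 1 - 'X^k.
Proof.
elim: k => [|k IHk]; first by rewrite /qint big_ord0 mul0r expr0 subrr.
by rewrite /qint big_ord_recr /= mulrDl -/(qint k) IHk exprSr; ring.
Qed.

Lemma qfact_qpoch k : qfact k * (1 - 'X) ^+ k = qpoch k.
Proof.
elim: k => [|k IHk]; first by rewrite /qfact /qpoch !big_ord0 mulr1.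
rewrite /qfact /qpoch !big_ord_recr /= -/(qfact k) -/(qpoch k) -IHk exprSr.
by rewrite -qint_mul_1subX; ring.
Qed.

Lemma qint_add m n : qint m + 'X^m * qint n = qint (m + n).
Proof.
have one_subX_neq0 : (1 - 'X : {poly int}) != 0.
  by apply/eqP => /(congr1 (horner^~ 2)); rewrite !hornerE => /eqP; rewrite subr_eq0.
by apply: (mulIf one_subX_neq0); rewrite mulrDl -mulrA !qint_mul_1subX exprD; ring.
Qed.

(* q-Pascal: [m+1+n+1]! = [m+n+1]! ([m+1] + q^(m+1) [n+1]). *)
Lemma qfact_mul_dvd m n : exists p, p * (qfact m * qfact n) = qfact (m + n).
Proof.
elim: m n => [|m IHm] n; first by exists 1; rewrite /qfact big_ord0 !mul1r.
elim: n => [|n IHn]; first by exists 1; rewrite /qfact big_ord0 !mul1r mulr1 addn0.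
have [p1 p1E] := IHm n.+1; have [p2 p2E] := IHn.
exists (p1 + 'X^(m.+1) * p2).
have qfactS k : qfact k.+1 = qfact k * qint k.+1 by rewrite /qfact big_ord_recr.
rewrite addnS [RHS]qfactS; have := qint_add m.+1 n.+1; rewrite addnS => <-.
by rewrite mulrDr {1}addSnnS -p1E -p2E !qfactS; ring.
Qed.

Lemma qint_monic k : qint k.+1 \is monic.
Proof.
have size_qint j : (size (qint j) <= j)%N.
  elim: j => [|j IHj]; first by rewrite /qint big_ord0 size_poly0.
  rewrite /qint big_ord_recr /= -/(qint j); apply: leq_trans (size_polyD _ _) _.
  by rewrite size_polyXn geq_max leqnn andbT (leq_trans IHj).
apply/monicP; rewrite /qint big_ord_recr /= -/(qint k) lead_coefDr ?lead_coefXn //.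
by rewrite size_polyXn ltnS size_qint.
Qed.

Lemma qfact_monic k : qfact k \is monic.
Proof. by apply: monic_prod => i _; exact: qint_monic. Qed.

Lemma qbinom_qpoch m n : qbinom m n * qpoch m * qpoch n = qpoch (m + n).
Proof.
have [p pE] := qfact_mul_dvd m n.
have -> : qbinom m n = p.
  by rewrite /qbinom -pE Pdiv.IdomainMonic.mulpK // monicMl qfact_monic.
by rewrite -!qfact_qpoch -pE exprD; ring.
Qed.

Lemma odds_mul (F : fieldType) (x y : F) : 1 - x != 0 -> 1 - y != 0 -> 1 - x * y != 0 ->
  x * y / (1 - x * y) * ((1 + x / (1 - x)) * (1 + y / (1 - y)) - x / (1 - x) * (y / (1 - y)))
  = x / (1 - x) * (y / (1 - y)).
Proof. by move=> x1 y1 xy1; field; rewrite x1 y1 xy1. Qed.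

Definition qX : {fraction {poly int}} := tofrac 'X.

Definition qratio k : {fraction {poly int}} := qX ^+ k / (1 - qX ^+ k).

Lemma tofrac_1subXn k : tofrac (1 - 'X^k : {poly int}) = 1 - qX ^+ k.
Proof. by rewrite rmorphB rmorph1 rmorphXn. Qed.

Lemma one_sub_qX_neq0 k : (0 < k)%N -> 1 - qX ^+ k != 0.
Proof.
move=> k_gt0; rewrite -tofrac_1subXn tofrac_eq0; apply/eqP => /(congr1 (horner^~ 0)).
by rewrite !hornerE expr0n; case: k k_gt0.
Qed.

Lemma qratio_add a b : (0 < a)%N -> (0 < b)%N ->
  qratio (a + b) * ((1 + qratio a) * (1 + qratio b) - qratio a * qratio b)
  = qratio a * qratio b.
Proof.
move=> a_gt0 b_gt0; have ab_gt0 : (0 < a + b)%N by rewrite addn_gt0 a_gt0.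
move: (one_sub_qX_neq0 a_gt0) (one_sub_qX_neq0 b_gt0) (one_sub_qX_neq0 ab_gt0).
by rewrite /qratio exprD; apply: odds_mul.
Qed.

Lemma Theta_tofrac (T : finType) (le : rel T) (bot top : T) (rk : T -> nat) r :
  tofrac (Theta (abIndex le bot top rk r))
  = tofrac (qpoch r) * chain_sum le bot rk r qratio top.
Proof.
rewrite Theta_abIndex rmorph_sum /chain_sum big_distrr /=; apply: eq_bigr => c _.
rewrite /chain_weight /qpoch !rmorph_prod -big_split /=; apply: eq_bigr => i _.
case: (c i) => [_|]; rewrite tofrac_1subXn ?mulr1 //.
by rewrite tofracXn /qratio mulrC divfK // one_sub_qX_neq0.
Qed.

Theorem mainTheorem8 (P : finType) (leP : rel P) (botP topP : P) (rkP : P -> nat)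
  (Q : finType) (leQ : rel Q) (botQ topQ : Q) (rkQ : Q -> nat) (m n : nat) :
  is_graded_poset leP botP topP rkP -> rkP topP = m.+1 ->
  is_graded_poset leQ botQ topQ rkQ -> rkQ topQ = n.+1 ->
  Theta (abIndex (dd_le leP leQ topP topQ) (dd_bot botP topP botQ topQ)
           (dd_top topP topQ) (dd_rk topP topQ rkP rkQ) (m + n))
  = qbinom m n * Theta (abIndex leP botP topP rkP m)
               * Theta (abIndex leQ botQ topQ rkQ n).
Proof.
move=> /is_graded_poset_graded GP /GP{}GP /is_graded_poset_graded GQ /GQ{}GQ.
apply/eqP; rewrite -tofrac_eq !tofracM !Theta_tofrac; apply/eqP.
rewrite (chain_sum_dd_top GP GQ qratio_add) -qbinom_qpoch !tofracM.
by rewrite mulrACA -!mulrA.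
Qed.
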